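(* Let $(\sigma,\rho)$ and $(\nu,\varrho)$ be two $G$-compatible pairs. The lattices $L_{(\sigma,\rho)}=\sigma^{-1}\mathbb Z^n\rtimes_\eta\rho\mathbb Z^m$ and $L_{(\nu,\varrho)}=\nu^{-1}\mathbb Z^n\rtimes_\eta\varrho\mathbb Z^m$ are commensurable if and only if $\nu\sigma^{-1}\in GL_n(\mathbb Q)$ and $\varrho^{-1}\rho\in GL_m(\mathbb Q)$.
   Context: Fix integers $1\le m\le n$. Let $\Delta_1,\dots,\Delta_m\in\mathbb R^{n\times n}$ be linearly independent, nonsingular, traceless diagonal matrices $\Delta_i=\mathrm{diag}(d_1^{(i)},\dots,d_n^{(i)})$ such that for each $i$, $d_k^{(i)}\neq d_j^{(i)}$ whenever $k\neq j$. For $t=(t_1,\dots,t_m)^T\in\mathbb R^m$ write $t\cdot\Delta=\sum_{i=1}^m t_i\Delta_i$ and $\eta(t)=e^{t\cdot\Delta}$. Let $G=\mathbb R^n\rtimes_\eta\mathbb R^m$ be the Lie group with underlying set $\mathbb R^n\times\mathbb R^m$ and multiplication $(x,t)(y,s)=(x+e^{t\cdot\Delta}y,\ t+s)$. A pair $(\sigma,\rho)\in GL_n(\mathbb R)\times GL_m(\mathbb R)$ is called $G$-compatible if $\sigma\exp(\rho^{(j)}\cdot\Delta)\sigma^{-1}\in SL_n(\mathbb Z)$ for all $j=1,\dots,m$, where $\rho^{(j)}$ is the $j$-th column of $\rho$. For such a pair, $\sigma^{-1}\mathbb Z^n\rtimes_\eta\rho\mathbb Z^m$ denotes the subgroup $\{(\sigma^{-1}v,\rho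 p): v\in\mathbb Z^n, p\in\mathbb Z^m\}$ of $G$, which is a lattice. Two lattices $\Gamma,\Gamma'$ in $G$ are commensurable if $[\Gamma:\Gamma\cap\Gamma']<\infty$ and $[\Gamma':\Gamma\cap\Gamma']<\infty$. *)

From HB Require Import structures.
From mathcomp Require Import all_boot all_order all_algebra.
From mathcomp Require Import reals sequences exp.
Set Implicit Arguments. Unset Strict Implicit. Unset Printing Implicit Defensive.
Import Order.TTheory GRing.Theory Num.Theory.
Local Open Scope ring_scope.

Section Defs.
Variables (R : realType) (n m : nat).

(* D i k = d_k^{(i)}; Delta_i = diag(d_1^{(i)}, ..., d_n^{(i)}). *)
Definition Delta (D : 'M[R]_(m, n)) (i : 'I_m) : 'M[R]_n := diag_mx (row i D).

Definition tDelta (D : 'M[R]_(m, n)) (t : 'cV[R]_m) : 'M[R]_n :=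
  \sum_(i < m) t i 0 *: Delta D i.

(* exp(t . Delta): the exponential of the diagonal matrix t . Delta,
   i.e. the diagonal matrix of the exponentials of its diagonal entries. *)
Definition eta (D : 'M[R]_(m, n)) (t : 'cV[R]_m) : 'M[R]_n :=
  diag_mx (\row_k expR (tDelta D t k k)).

Definition Delta_hyps (D : 'M[R]_(m, n)) : Prop :=
  [/\ ((1 <= m)%N /\ (m <= n)%N),
      (forall c : 'I_m -> R, \sum_(i < m) c i *: Delta D i = 0 -> forall i, c i = 0),
      (forall i, \det (Delta D i) != 0),
      (forall i, \tr (Delta D i) = 0) &
      (forall i (k j : 'I_n), k != j -> D i k != D i j)].

Definition G := ('cV[R]_n * 'cV[R]_m)%type.
Definition gmul (D : 'M[R]_(m, n)) (a b : G) : G :=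
  (a.1 + eta D a.2 *m b.1, a.2 + b.2).

Definition int_mx k (A : 'M[R]_k) : Prop := forall i j, A i j \is a Num.int.
Definition in_SLnZ (A : 'M[R]_n) : Prop := int_mx A /\ \det A = 1.

Definition is_rat (x : R) : Prop := exists q : rat, x = ratr q.
Definition in_GLQ k (A : 'M[R]_k) : Prop :=
  A \in unitmx /\ forall i j, is_rat (A i j).

Definition G_compatible (D : 'M[R]_(m, n)) (sigma : 'M[R]_n) (rho : 'M[R]_m) : Prop :=
  [/\ sigma \in unitmx, rho \in unitmx &
      forall j : 'I_m, in_SLnZ (sigma *m eta D (col j rho) *m invmx sigma)].

Definition lattice (sigma : 'M[R]_n) (rho : 'M[R]_m) (g : G) : Prop :=
  exists (v : 'cV[int]_n) (p : 'cV[int]_m),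
    g = (invmx sigma *m map_mx intr v, rho *m map_mx intr p).

Definition finite_index (D : 'M[R]_(m, n)) (K H : G -> Prop) : Prop :=
  exists s : seq G, (forall g, g \in s -> K g) /\
    forall k, K k -> exists2 g, g \in s & exists h, H h /\ k = gmul D g h.

Definition commensurable (D : 'M[R]_(m, n)) (L1 L2 : G -> Prop) : Prop :=
  let I := fun g => L1 g /\ L2 g in
  finite_index D L1 I /\ finite_index D L2 I.

End Defs.

From Pilot Require Import Defs.
From HB Require Import structures.
From mathcomp Require Import all_boot all_order all_algebra.
From mathcomp Require Import reals sequences exp.
Import Order.TTheory GRing.Theory Num.Theory.
Local Open Scope ring_scope.
Set Implicit Arguments. Unset Strict Implicit.

(* The matrices sigma exp(rho p . Delta) sigma^-1, p in Z^m, form a group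
   generated by the G-compatibility matrices, which lie in SL_n(Z); hence they
   are integral, and L = sigma^-1 Z^n x rho Z^m is a subgroup of G.
   If N1 nu sigma^-1 and N2 varrho^-1 rho are integral, the pairs
   (sigma^-1 N1 w, rho N2 q) form a subgroup of L lying in the other lattice
   L', and its left cosets in L are represented by (0, rho r2)(sigma^-1 r1, 0)
   with r1, r2 residues mod N1, N2.  Conversely, if L meets L' in a subgroup of
   finite index, two of the elements (sigma^-1 a e_j, 0), a in N, lie in the
   same coset, so (sigma^-1 (b - a) e_j, 0) lies in L': a positive multiple of
   each column of nu sigma^-1 is integral.  The elements (0, rho a e_j) treat
   varrho^-1 rho in the same way. *)

Section IntegerMatrices.
Variable R : archiNumDomainType.

Lemma mxOver_intP k l (A : 'M[R]_(k, l)) :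
  reflect (exists Z : 'M[int]_(k, l), A = map_mx intr Z) (A \is a mxOver Num.int).
Proof.
apply: (iffP mxOverP) => [Aint | [Z ->] i j]; last by rewrite mxE intr_int.
have zP i j : exists z : int, A i j == z%:~R.
  by have /intrP[z Az] := Aint i j; exists z; rewrite Az.
exists (\matrix_(i, j) xchoose (zP i j)).
by apply/matrixP => i j; rewrite !mxE; apply/eqP; exact: (xchooseP (zP i j)).
Qed.

Lemma mxOver_int_inv k (A : 'M[R]_k) :
  A \is a mxOver Num.int -> \det A = 1 -> invmx A \is a mxOver Num.int.
Proof.
move=> /mxOver_intP[Z ->] detA; apply/mxOver_intP; exists (\adj Z).
by rewrite /invmx unitmxE detA unitr1 invr1 scale1r map_mx_adj.
Qed.

End IntegerMatrices.

Lemma mulmx_intr_col (R : pzRingType) k l (A : 'M[R]_(k, l)) (p : 'cV[int]_l) :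
  A *m map_mx intr p = \sum_j col j A *~ p j 0.
Proof.
apply/matrixP => i z; rewrite ord1 !mxE summxE; apply: eq_bigr => j _.
by rewrite -scaler_int !mxE mulrzl mulrzr.
Qed.

Section InverseMatrices.
Variable R : comUnitRingType.

Lemma mulmx1_invmx k (A B : 'M[R]_k) : A *m B = 1%:M -> invmx A = B.
Proof.
move=> AB; have [A_unit _] := mulmx1_unit AB.
by rewrite -[RHS](mulKmx A_unit) AB mulmx1.
Qed.

Lemma invmxM k (A B : 'M[R]_k) :
  A \in unitmx -> B \in unitmx -> invmx (A *m B) = invmx B *m invmx A.
Proof.
move=> A_unit B_unit; apply: mulmx1_invmx.
by rewrite -mulmxA (mulmxA B) mulmxV // mul1mx mulmxV.
Qed.

End InverseMatrices.

Section RationalMatrices.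
Variable R : realType.

Lemma rat_mxP k l (A : 'M[R]_(k, l)) :
  (forall i j, is_rat (A i j)) <-> exists Q : 'M[rat]_(k, l), A = map_mx ratr Q.
Proof.
split=> [Arat | [Q ->] i j]; last by exists (Q i j); rewrite mxE.
have qP i j : exists q : rat, A i j == ratr q.
  by have [q Aq] := Arat i j; exists q; rewrite Aq.
exists (\matrix_(i, j) xchoose (qP i j)).
by apply/matrixP => i j; rewrite !mxE; apply/eqP; exact: (xchooseP (qP i j)).
Qed.

Lemma rat_mx_common_denom k l (Q : 'M[rat]_(k, l)) :
  exists2 N : nat, (0 < N)%N & exists Z : 'M[int]_(k, l), Q *+ N = map_mx intr Z.
Proof.
pose den ij := `|denq (Q ij.1 ij.2)|%N.
exists (\prod_ij den ij)%N.
  by rewrite prodn_gt0 // => ij; rewrite absz_gt0 denq_neq0.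
exists (\matrix_(i, j) (numq (Q i j) *+ \prod_(ij | ij != (i, j)) den ij)).
apply/matrixP => i j; rewrite mulmxnE !mxE (bigD1 (i, j)) //= mulrnA.
have -> : Q i j *+ den (i, j) = (numq (Q i j))%:~R.
  by rewrite numqE -mulr_natr pmulrn absz_denq.
by rewrite rmorphMn.
Qed.

Lemma rat_mx_int_multiple k l (A : 'M[R]_(k, l)) :
  (forall i j, is_rat (A i j)) ->
  exists2 N : nat, (0 < N)%N & exists Z : 'M[int]_(k, l), A *+ N = map_mx intr Z.
Proof.
move=> /rat_mxP[Q ->]; have [N N0 [Z QZ]] := rat_mx_common_denom Q.
exists N => //; exists Z; apply/matrixP => i j.
by rewrite mulmxnE !mxE -rmorphMn -mulmxnE QZ mxE rmorph_int.
Qed.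

Lemma rat_mx_of_col_multiples k l (A : 'M[R]_(k, l)) :
  (forall j, exists2 d : nat, (0 < d)%N &
     exists w : 'cV[int]_k, col j A *+ d = map_mx intr w) ->
  forall i j, is_rat (A i j).
Proof.
move=> Acol i j; have [d d0 [w /matrixP/(_ i 0)]] := Acol j.
rewrite mulmxnE !mxE => Adw; exists ((w i 0)%:~R / d%:R).
rewrite fmorph_div rmorph_int rmorph_nat -Adw -[_ *+ d]mulr_natr mulfK //.
by rewrite pnatr_eq0 -lt0n.
Qed.

Lemma in_GLQ_inv k (A : 'M[R]_k) : in_GLQ A -> in_GLQ (invmx A).
Proof.
case=> Aunit /rat_mxP[Q AQ]; split; first by rewrite unitmx_inv.
by apply/rat_mxP; exists (invmx Q); rewrite AQ map_invmx.
Qed.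

End RationalMatrices.

Section SemidirectProduct.
Variables (R : realType) (n m : nat) (D : 'M[R]_(m, n)).
Local Notation G := (G R n m).
Local Notation eta := (Defs.eta D).
Local Notation gmul := (gmul D).

Lemma tDeltaD t s : tDelta D (t + s) = tDelta D t + tDelta D s.
Proof.
by rewrite /tDelta -big_split; apply: eq_bigr => i _; rewrite mxE scalerDl.
Qed.

Lemma etaD t s : eta (t + s) = eta t *m eta s.
Proof.
apply/matrixP => i j; rewrite mul_diag_mx !mxE tDeltaD mxE expRD.
by case: (i == j); rewrite ?mulr0n ?mulr0 ?mulr1n.
Qed.

Lemma eta0 : eta 0 = 1.
Proof.
have tDelta0 : tDelta D 0 = 0.
  by rewrite /tDelta big1 // => i _; rewrite mxE scale0r.
by apply/matrixP => i j; rewrite /Defs.eta tDelta0 !mxE expR0.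
Qed.

Definition ginv (a : G) : G := (- (eta (- a.2) *m a.1), - a.2).

Lemma gmul_ginvE x t y s :
  gmul (ginv (x, t)) (y, s) = (eta (- t) *m (y - x), s - t).
Proof. by rewrite /Defs.gmul /= mulmxBr !(addrC (- _)). Qed.

Lemma gmul_ginv_coset g h1 h2 :
  gmul (ginv (gmul g h1)) (gmul g h2) = gmul (ginv h1) h2.
Proof.
case: g h1 h2 => [x t] [y1 s1] [y2 s2].
rewrite [gmul (x, t) (y1, s1)]/Defs.gmul [gmul (x, t) (y2, s2)]/Defs.gmul /=.
rewrite !gmul_ginvE [x + _]addrC [t + s2]addrC !addrKA -mulmxBr mulmxA -etaD.
by rewrite opprD addrAC addNr add0r.
Qed.

End SemidirectProduct.

Section ConjugatedEta.
Variables (R : realType) (n m : nat) (D : 'M[R]_(m, n)) (sigma : 'M[R]_n).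
Hypothesis sigma_unit : sigma \in unitmx.
Local Notation eta := (Defs.eta D).

Definition conj_eta t := sigma *m eta t *m invmx sigma.

Lemma conj_etaD t s : conj_eta (t + s) = conj_eta t *m conj_eta s.
Proof. by rewrite /conj_eta etaD !mulmxA mulmxKV. Qed.

Lemma conj_eta0 : conj_eta 0 = 1%:M.
Proof. by rewrite /conj_eta eta0 mulmx1 mulmxV. Qed.

Lemma conj_etaN t : conj_eta (- t) = invmx (conj_eta t).
Proof. by apply/esym/mulmx1_invmx; rewrite -conj_etaD subrr conj_eta0. Qed.

(* Asking for -t as well makes this an additive subgroup of R^m. *)
Definition int_conj_eta : {pred 'cV[R]_m} :=
  [pred t | (conj_eta t \is a mxOver Num.int) &&
            (conj_eta (- t) \is a mxOver Num.int)].

Fact int_conj_eta_zmod_closed : zmod_closed int_conj_eta.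
Proof.
split=> [|t s /andP[t1 t2] /andP[s1 s2]].
  by rewrite inE /= oppr0 conj_eta0 mxOver_scalar ?rpred0 ?rpred1.
by rewrite inE /= opprB !conj_etaD (mxOverM t1 s2) (mxOverM s1 t2).
Qed.

HB.instance Definition _ :=
  GRing.isZmodClosed.Build _ int_conj_eta int_conj_eta_zmod_closed.

End ConjugatedEta.

Section Residues.
Variables (k N : nat).

Definition residues : seq 'cV[int]_k :=
  [seq \col_i (f i : nat)%:Z | f : {ffun 'I_k -> 'I_N} <- enum {ffun 'I_k -> 'I_N}].
Definition modv (p : 'cV[int]_k) := \col_i modz (p i 0) N.
Definition divv (p : 'cV[int]_k) := \col_i divz (p i 0) N.

Lemma divv_modv p : p = divv p *+ N + modv p.
Proof.
by apply/matrixP => i j; rewrite ord1 !mxE mulmxnE !mxE -mulr_natr natz -divz_eq.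
Qed.

Lemma modv_residue p : (0 < N)%N -> modv p \in residues.
Proof.
move=> N_gt0; pose r i := modz (p i 0) N.
have mod_ge0 i : 0 <= r i by rewrite modz_ge0 // eqz_nat -lt0n.
have mod_lt i : (absz (r i) < N)%N.
  by rewrite -ltz_nat gez0_abs // ltz_pmod.
apply/mapP; exists [ffun i => Ordinal (mod_lt i)]; first by rewrite mem_enum.
by apply/matrixP => i j; rewrite !mxE ffunE /= gez0_abs.
Qed.

End Residues.

Section CompatibleLattice.
Variables (R : realType) (n m : nat) (D : 'M[R]_(m, n)).
Variables (sigma : 'M[R]_n) (rho : 'M[R]_m).
Hypothesis compat : G_compatible D sigma rho.
Local Notation eta := (Defs.eta D).
Local Notation L := (lattice sigma rho).

Let sigma_unit : sigma \in unitmx. Proof. by case: compat. Qed.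

Lemma col_int_conj_eta j : col j rho \in int_conj_eta D sigma.
Proof.
have [_ _ /(_ j)[/mxOverP int_conj det_conj]] := compat.
by rewrite inE /= conj_etaN // int_conj mxOver_int_inv.
Qed.

Lemma conj_eta_int p :
  conj_eta D sigma (rho *m map_mx intr p) \is a mxOver Num.int.
Proof.
suff /andP[] : rho *m map_mx intr p \in int_conj_eta D sigma by [].
by rewrite mulmx_intr_col rpred_sum // => j _; rewrite rpredMz ?col_int_conj_eta.
Qed.

Lemma eta_lattice_stable p v : exists u : 'cV[int]_n,
  eta (rho *m map_mx intr p) *m (invmx sigma *m map_mx intr v) =
  invmx sigma *m map_mx intr u.
Proof.
have /mxOver_intP[Z EZ] := conj_eta_int p; exists (Z *m v).
by rewrite map_mxM -EZ /conj_eta !mulmxA mulVmx // mul1mx.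
Qed.

Lemma lattice_gmul g h : L g -> L h -> L (gmul D g h).
Proof.
move=> [v1 [p1 ->]] [v2 [p2 ->]]; have [u Eu] := eta_lattice_stable p1 v2.
by exists (v1 + u), (p1 + p2); rewrite /Defs.gmul /= Eu !map_mxD !mulmxDr.
Qed.

Lemma lattice_gdiv g h : L g -> L h -> L (gmul D (ginv D g) h).
Proof.
move=> [v1 [p1 ->]] [v2 [p2 ->]].
have [u Eu] := eta_lattice_stable (- p1) (v2 - v1).
rewrite gmul_ginvE; exists u, (p2 - p1).
by rewrite -Eu map_mxN mulmxN !map_mxB !mulmxBr.
Qed.

Definition coset_reps N1 N2 : seq (G R n m) :=
  [seq gmul D (0, rho *m map_mx intr r2) (invmx sigma *m map_mx intr r1, 0)
  | r1 <- residues n N1, r2 <- residues m N2].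

Lemma coset_reps_lattice N1 N2 g : g \in coset_reps N1 N2 -> L g.
Proof.
case/allpairsP => -[r1 r2] [_ _ ->]; apply: lattice_gmul.
  by exists 0, r2; rewrite map_mx0 mulmx0.
by exists r1, 0; rewrite map_mx0 mulmx0.
Qed.

Lemma lattice_coset_decomposition N1 N2 x :
  (0 < N1)%N -> (0 < N2)%N -> L x ->
  exists2 g, g \in coset_reps N1 N2 & exists w q,
    x = gmul D g (invmx sigma *m map_mx intr (w *+ N1),
                  rho *m map_mx intr (q *+ N2)).
Proof.
move=> N1_gt0 N2_gt0 [v [p ->]].
have [u Eu] := eta_lattice_stable (- modv N2 p) v.
exists (gmul D (0, rho *m map_mx intr (modv N2 p))
                (invmx sigma *m map_mx intr (modv N1 u), 0)).
  by apply/allpairsP; exists (modv N1 u, modv N2 p); rewrite !modv_residue.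
exists (divv N1 u), (divv N2 p); rewrite /Defs.gmul /= add0r !addr0.
rewrite -!mulmxDr -!map_mxD !(addrC (modv _ _)) -!divv_modv -Eu mulmxA -etaD.
by rewrite map_mxN mulmxN subrr eta0 mul1mx.
Qed.

End CompatibleLattice.

Lemma nat_pigeonhole (T : eqType) (s : seq T) (c : nat -> T) :
  (forall a, c a \in s) -> exists a b, (a < b)%N /\ c a = c b.
Proof.
move=> cs; have cover : {subset mkseq c (size s).+1 <= s}.
  by move=> _ /mapP[a _ ->].
have : ~~ uniq (mkseq c (size s).+1).
  by apply/negP => /uniq_leq_size/(_ cover); rewrite size_mkseq ltnn.
move=> /(uniqPn (c 0%N))[a [b [ab]]]; rewrite size_mkseq => b_lt.
by rewrite !nth_mkseq // => [cab|]; [exists a, b | exact: ltn_trans b_lt].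
Qed.

Section FiniteIndex.
Variables (R : realType) (n m : nat) (D : 'M[R]_(m, n)).
Implicit Types K H : G R n m -> Prop.

Lemma finite_indexS K H H' :
  (forall g, H g -> H' g) -> finite_index D K H -> finite_index D K H'.
Proof.
move=> HH' [s [sK cover]]; exists s; split=> // k /cover[g gs [h [Hh ->]]].
by exists g => //; exists h; split; [exact: HH'|].
Qed.

Lemma finite_index_pigeonhole K H (k : nat -> G R n m) :
  (forall h1 h2, H h1 -> H h2 -> H (gmul D (ginv D h1) h2)) ->
  finite_index D K H -> (forall a, K (k a)) ->
  exists a b, (a < b)%N /\ H (gmul D (ginv D (k a)) (k b)).
Proof.
move=> Hdiv [s [_ cover]] Kk.
have coset a : exists g, g \in s /\ exists h, H h /\ k a = gmul D g h.
  by have [g gs kg] := cover _ (Kk a); exists g.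
have [rep rep_spec] := boolp.choice coset.
have [a [b [ab rep_ab]]] := nat_pigeonhole (fun a => (rep_spec a).1).
exists a, b; split=> //.
have [_ [h1 [Hh1 ->]]] := rep_spec a; have [_ [h2 [Hh2 ->]]] := rep_spec b.
by rewrite rep_ab gmul_ginv_coset; exact: Hdiv.
Qed.

End FiniteIndex.

Section Commensurability.
Variables (R : realType) (n m : nat) (D : 'M[R]_(m, n)).
Variables (sigma nu : 'M[R]_n) (rho varrho : 'M[R]_m).
Local Notation L1 := (lattice sigma rho).
Local Notation L2 := (lattice nu varrho).

Lemma finite_index_rat :
  G_compatible D sigma rho -> G_compatible D nu varrho ->
  finite_index D L1 (fun g => L1 g /\ L2 g) ->
  (forall i j, is_rat ((nu *m invmx sigma) i j)) /\
  (forall i j, is_rat ((invmx varrho *m rho) i j)).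
Proof.
move=> compat1 compat2 index; have [nu_unit varrho_unit _] := compat2.
have cap_div h1 h2 : L1 h1 /\ L2 h1 -> L1 h2 /\ L2 h2 ->
    L1 (gmul D (ginv D h1) h2) /\ L2 (gmul D (ginv D h1) h2).
  by move=> [h11 h12] [h21 h22]; split; apply: lattice_gdiv.
have pigeon := finite_index_pigeonhole cap_div index.
split; apply: rat_mx_of_col_multiples => j.
- have [|a [b [ab [_ [w [q [Ew _]]]]]]] :=
    pigeon (fun a => (invmx sigma *m (delta_mx j 0 *+ a), 0)).
    move=> a; exists (delta_mx j 0 *+ a), 0.
    by rewrite [map_mx _ (_ *+ _)]raddfMn /= map_delta_mx map_mx0 mulmx0.
  rewrite oppr0 eta0 !mul1mx addrC -mulmxBr -(mulrnBr _ (ltnW ab)) in Ew.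
  exists (b - a)%N; first by rewrite subn_gt0.
  by exists w; rewrite colE -scaler_nat scalemxAr scaler_nat -mulmxA Ew mulKVmx.
- have [|a [b [ab [_ [w [q [_ Eq]]]]]]] :=
    pigeon (fun a => (0, rho *m (delta_mx j 0 *+ a))).
    move=> a; exists 0, (delta_mx j 0 *+ a).
    by rewrite [map_mx _ (_ *+ _)]raddfMn /= map_delta_mx map_mx0 mulmx0.
  rewrite addrC -mulmxBr -(mulrnBr _ (ltnW ab)) in Eq.
  exists (b - a)%N; first by rewrite subn_gt0.
  by exists q; rewrite colE -scaler_nat scalemxAr scaler_nat -mulmxA Eq mulKmx.
Qed.

Lemma rat_finite_index :
  G_compatible D sigma rho -> nu \in unitmx -> varrho \in unitmx ->
  (forall i j, is_rat ((nu *m invmx sigma) i j)) ->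
  (forall i j, is_rat ((invmx varrho *m rho) i j)) ->
  finite_index D L1 (fun g => L1 g /\ L2 g).
Proof.
move=> compat nu_unit varrho_unit.
move=> /rat_mx_int_multiple[N1 N1_gt0 [Z1 EZ1]].
move=> /rat_mx_int_multiple[N2 N2_gt0 [Z2 EZ2]].
exists (coset_reps D sigma rho N1 N2).
split=> [g|x Lx]; first exact: coset_reps_lattice.
have [g g_rep [w [q ->]]] := lattice_coset_decomposition compat N1_gt0 N2_gt0 Lx.
exists g => //; eexists; split; last reflexivity.
split; first by exists (w *+ N1), (q *+ N2).
exists (Z1 *m w), (Z2 *m q); congr pair.
- rewrite map_mxM -EZ1 raddfMn /= -!scaler_nat -scalemxAl -!scalemxAr.
  by rewrite !mulmxA mulVmx // mul1mx.
- rewrite map_mxM -EZ2 raddfMn /= -!scaler_nat -scalemxAl -!scalemxAr.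
  by rewrite !mulmxA mulmxV // mul1mx.
Qed.

End Commensurability.

Theorem mainTheorem5 (R : realType) (n m : nat) (D : 'M[R]_(m, n))
    (sigma nu : 'M[R]_n) (rho varrho : 'M[R]_m) :
  Delta_hyps D ->
  G_compatible D sigma rho ->
  G_compatible D nu varrho ->
  (commensurable D (lattice sigma rho) (lattice nu varrho) <->
   in_GLQ (nu *m invmx sigma) /\ in_GLQ (invmx varrho *m rho)).
Proof.
move=> _ compat1 compat2.
have [sigma_unit rho_unit _] := compat1; have [nu_unit varrho_unit _] := compat2.
have unit1 : nu *m invmx sigma \in unitmx.
  by rewrite unitmx_mul nu_unit unitmx_inv.
have unit2 : invmx varrho *m rho \in unitmx.
  by rewrite unitmx_mul unitmx_inv varrho_unit.
split=> [[index1 _] | [GLQ1 GLQ2]].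
  by have [rat1 rat2] := finite_index_rat compat1 compat2 index1; split; split.
have [_ rat1_inv] := in_GLQ_inv GLQ1; have [_ rat2_inv] := in_GLQ_inv GLQ2.
rewrite invmxM ?unitmx_inv // invmxK in rat1_inv.
rewrite invmxM ?unitmx_inv // invmxK in rat2_inv.
split; first exact: rat_finite_index compat1 nu_unit varrho_unit GLQ1.2 GLQ2.2.
have := rat_finite_index compat2 sigma_unit rho_unit rat1_inv rat2_inv.
by apply: finite_indexS => g [].
Qed.
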